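(* Let $f \colon \mathbb{R}^n \to \mathbb{R}$ and $g \colon \mathbb{R}^n \to \mathbb{R}^m$ be continuously differentiable, let $X \subseteq \mathbb{R}^m$ be nonempty and closed, let $\rho>0$, and let $p^\rho(y) = \sum_{i=1}^n p_i^\rho(y_i)$ where each $p_i^\rho\colon\mathbb{R}\to\mathbb{R}$ satisfies (P.1)–(P.3) below with unique minimizer $s_i^\rho>0$. Let $x^*$ be a local minimizer of $$\text{(SPO)}\qquad \min_x\ f(x) + \rho\|x\|_0 \quad \text{s.t. } g(x)\in X,$$ and define $y^*\in\mathbb{R}^n$ by $y_i^* = s_i^\rho$ if $x_i^*=0$ and $y_i^*=0$ otherwise (so that $(x^*,y^* )$ is a local minimizer of (SPOref) below). Let $I_0(x^* ) = \{i : x_i^*=0\}$ and let $P \in \mathbb{R}^{|I_0(x^* )|\times n}$ be the matrix whose rows are $e_i^T$, $i\in I_0(x^* )$. Then the following are equivalent: (a) there exists $\alpha^*>0$ such that for every $\alpha\ge\alpha^*$, $x^*$ is a local minimizer of $f(x) + \alpha\|Px\|_1$ over the set $\{x : g(x)\in X\}$ (i.e. $f + \alpha\|P\cdot\|_1$ is an exact penalty function at $x^*$ for the tightened problem $\min f(x)$ s.t. $g(x)\in X$, $x_i = 0$ for all $i \in I_0(x^* )$); (b) there exists $\alpha^*>0$ such that for every $\alpha\ge\alpha^*$, $(x^*,y^* )$ is a local minimizer of $$\text{(Pen}(\alpha))\qquad \min_{x,y}\ f(x) + p^\rho(y) + \alpha |x|^T y \quad\text{s.t. } g(x)\in X,\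 y\ge 0$$ (i.e. Pen$(\alpha)$ is an exact penalty function at $(x^*,y^* )$ for the problem (SPOref): $\min_{x,y} f(x)+p^\rho(y)$ s.t. $g(x)\in X$, $x\circ y = 0$, $y\ge 0$).
   Context: $\|x\|_0$ is the number of nonzero components of $x$; $|x| = (|x_1|,\dots,|x_n|)^T$; $\circ$ is the componentwise product; $e_i$ is the $i$-th unit vector. Conditions on each $p_i^\rho$: (P.1) $p_i^\rho$ is convex and attains a unique minimum at some point $s_i^\rho>0$; (P.2) $p_i^\rho(0) - p_i^\rho(s_i^\rho) = \rho$; (P.3) $p_i^\rho$ is continuously differentiable. *)

From HB Require Import structures.
From mathcomp Require Import all_boot all_order all_algebra.
From mathcomp Require Import all_classical all_reals all_analysis.
Set Implicit Arguments. Unset Strict Implicit. Unset Printing Implicit Defensive.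
Import Order.TTheory GRing.Theory Num.Theory.
Import numFieldNormedType.Exports.
Local Open Scope classical_set_scope.
Local Open Scope ring_scope.

Definition local_minimizer (T : topologicalType) (R : realType)
  (F : T -> R) (S : set T) (x0 : T) : Prop :=
  S x0 /\ (\forall x \near x0, S x -> F x0 <= F x).

(* continuously differentiable map between normed spaces of vectors:
   differentiable everywhere and each directional derivative
   x |-> ('d f x) v is continuous (equivalent, in finite dimension, to
   continuity of x |-> 'd f x). *)
Definition C1 (R : realType) (n m : nat) (f : 'rV[R]_n -> 'rV[R]_m) : Prop :=
  (forall x, differentiable f x) /\
  (forall v : 'rV[R]_n, continuous (fun x => ('d f x : 'rV[R]_n -> 'rV[R]_m) v)).

Definition C1_scalar (R : realType) (n : nat) (f : 'rV[R]_n -> R) : Prop :=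
  (forall x, differentiable f x) /\
  (forall v : 'rV[R]_n, continuous (fun x => ('d f x : 'rV[R]_n -> R) v)).

Definition norm0 (R : realType) (n : nat) (x : 'rV[R]_n) : nat :=
  #|[set i : 'I_n | x 0 i != 0]|.

Definition norm1c (R : realType) (k : nat) (v : 'cV[R]_k) : R :=
  \sum_(j < k) `|v j 0|.

Definition I0 (R : realType) (n : nat) (x : 'rV[R]_n) : {set 'I_n} :=
  [set i : 'I_n | x 0 i == 0].

(* P : the |I_0(x)| x n matrix whose rows are e_i^T, i in I_0(x)
   (listed in increasing order of i) *)
Definition Pmat (R : realType) (n : nat) (x : 'rV[R]_n) : 'M[R]_(#|I0 x|, n) :=
  \matrix_(k < #|I0 x|, j < n) (enum_val k == j)%:R.

Definition convexR (R : realType) (p : R -> R) : Prop :=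
  forall (x y t : R), 0 <= t -> t <= 1 ->
    p (t * x + (1 - t) * y) <= t * p x + (1 - t) * p y.

Definition P_conditions (R : realType) (rho : R) (p : R -> R) (s : R) : Prop :=
  [/\ convexR p, 0 < s, (forall t, t != s -> p s < p t),
      p 0 - p s = rho &
      (forall t, derivable p t 1) /\ continuous (derive1 p)].

From HB Require Import structures.
From mathcomp Require Import all_boot all_order all_algebra.
From mathcomp Require Import all_classical all_reals all_analysis.
From mathcomp Require Import ring lra.
Import Order.TTheory GRing.Theory Num.Theory.
Import numFieldNormedType.Exports.
Local Open Scope classical_set_scope.
Local Open Scope ring_scope.

(* Near (xs, ys) the coordinates y_i with xs_i = 0 stay above some c > 0, and
   |x_i| stays above |xs_i| / 2 when xs_i <> 0. In the first case s_i minimizes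
   p_i, so p_i(y_i) + a |x_i| y_i >= p_i(s_i) + a c |x_i|; in the second,
   convexity gives p_i(y_i) >= p_i(0) - L_i y_i with L_i = p_i(0) - p_i(-1), and
   a |x_i| y_i absorbs L_i y_i once a |xs_i| >= 2 |L_i|. So near (xs, ys) the
   penalty Pen(a) dominates the l1 penalty with weight a c. Conversely, freezing
   y = ys turns Pen(a) into f + a sum_{I_0} s_i |x_i| <= f + a (max s) |Px|_1. *)

Lemma exists_ub_gt {R : realDomainType} {I : finType} (F : I -> R) :
  exists2 M, 0 < M & forall i, F i < M.
Proof.
have sum_ge0 : 0 <= \sum_i `|F i| by apply: sumr_ge0 => i _.
exists (1 + \sum_i `|F i|) => [|i]; first by lra.
have : `|F i| <= \sum_j `|F j| by rewrite (bigD1 i) //= lerDl sumr_ge0.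
by have := ler_norm (F i); lra.
Qed.

Lemma norm1c_Pmat (R : realType) n (xs x : 'rV[R]_n) :
  norm1c (Pmat xs *m x^T) = \sum_(i in I0 xs) `|x 0 i|.
Proof.
rewrite /norm1c (big_enum_val (fun i => `|x 0 i|)); apply: eq_bigr => k _.
rewrite !mxE (bigD1 (enum_val k)) //= !mxE eqxx mul1r big1 ?addr0 // => j.
by rewrite !mxE eq_sym => /negbTE ->; rewrite mul0r.
Qed.

(* 0 is the convex combination y/(1+y) * (-1) + 1/(1+y) * y. *)
Lemma convexR_slope_le {R : realType} {p : R -> R} y : convexR p -> 0 <= y ->
  y * (p 0 - p (-1)) <= p y - p 0.
Proof.
move=> p_cvx y_ge0; have y1_gt0 : 0 < 1 + y by lra.
have t_ge0 : 0 <= y / (1 + y) by rewrite divr_ge0 // ltW.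
have t_le1 : y / (1 + y) <= 1 by rewrite ler_pdivrMr // mul1r lerDr.
have := p_cvx (-1) y _ t_ge0 t_le1.
have -> : y / (1 + y) * -1 + (1 - y / (1 + y)) * y = 0 by field; lra.
have -> : 1 - y / (1 + y) = (1 + y)^-1 by field; lra.
move=> /(ler_wpM2l (ltW y1_gt0)).
have -> : (1 + y) * (y / (1 + y) * p (-1) + (1 + y)^-1 * p y) = y * p (-1) + p y.
  by field; lra.
lra.
Qed.

Lemma near_norm_coord_gt (R : realType) n (a : 'rV[R]_n) i c :
  c < `|a 0 i| -> \forall x \near a, c < `|(x : 'rV[R]_n) 0 i|.
Proof.
have norm_coord_cvg : (fun x : 'rV[R]_n => `|x 0 i|) @ a --> `|a 0 i|.
  by apply: continuous_comp; [exact: coord_continuous | exact: norm_continuous].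
exact: (cvgr_gt _ norm_coord_cvg).
Qed.

Lemma local_minimizer_section (T U : topologicalType) (R : realType)
    (F : T * U -> R) (S : set (T * U)) a b :
  local_minimizer F S (a, b) ->
  local_minimizer (fun x => F (x, b)) [set x | S (x, b)] a.
Proof.
case=> Sab [[A B] /= [nA nB] AB]; split=> //.
by apply: filterS nA => x Ax; apply: (AB (x, b)); split=> //; exact: nbhs_singleton.
Qed.

Section ExactPenalty.
Set Implicit Arguments.
Unset Strict Implicit.
Variables (R : realType) (n : nat) (f : 'rV[R]_n -> R) (D : set 'rV[R]_n).
Variables (p : 'I_n -> R -> R) (s : 'I_n -> R) (xs : 'rV[R]_n).
Hypothesis p_convex : forall i, convexR (p i).
Hypothesis s_gt0 : forall i, 0 < s i.
Hypothesis p_min : forall i t, p i (s i) <= p i t.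

Definition l1_obj (al : R) (x : 'rV[R]_n) := f x + al * norm1c (Pmat xs *m x^T).

Definition ystar : 'rV[R]_n := \row_i (if xs 0 i == 0 then s i else 0).

Definition pen_obj (al : R) (xy : 'rV[R]_n * 'rV[R]_n) :=
  f xy.1 + \sum_(i < n) p i (xy.2 0 i) + al * \sum_(i < n) `|xy.1 0 i| * xy.2 0 i.

Definition pen_feasible : set ('rV[R]_n * 'rV[R]_n) :=
  [set xy : 'rV[R]_n * 'rV[R]_n | D xy.1 /\ forall i, 0 <= xy.2 0 i].

Lemma ystar_ge0 i : 0 <= ystar 0 i.
Proof. by rewrite mxE; case: ifP => // _; exact: ltW. Qed.

Lemma pen_obj_star al : pen_obj al (xs, ystar) = f xs + \sum_(i < n) p i (ystar 0 i).
Proof.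
rewrite /pen_obj /= [X in al * X]big1 ?mulr0 ?addr0 // => i _.
by rewrite mxE; case: eqP => [->|_]; rewrite ?normr0 ?mul0r ?mulr0.
Qed.

Lemma l1_obj_star al : l1_obj al xs = f xs.
Proof.
by rewrite /l1_obj norm1c_Pmat big1 ?mulr0 ?addr0 // => i; rewrite inE => /eqP ->; rewrite normr0.
Qed.

Lemma pen_term_ge i al c u y : 0 <= al -> 0 <= u -> 0 <= y ->
    (xs 0 i = 0 -> c <= y) ->
    (xs 0 i != 0 -> `|p i 0 - p i (-1)| <= al * u) ->
  (if xs 0 i == 0 then al * c * u else 0) + p i (ystar 0 i) <= p i y + al * (u * y).
Proof.
move=> al_ge0 u_ge0 y_ge0 c_le_y L_le; rewrite /ystar mxE.
have [xi0|xi_neq0] := eqVneq (xs 0 i) 0.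
  have := p_min i y.
  have : 0 <= al * u * (y - c) by rewrite !mulr_ge0 // subr_ge0 c_le_y.
  lra.
rewrite add0r.
have := convexR_slope_le y (p_convex i) y_ge0.
have := ler_norm (- (p i 0 - p i (-1))); rewrite normrN.
have := L_le xi_neq0; nra.
Qed.

Lemma near_star_bounds al c : 0 <= al ->
    (forall i, xs 0 i = 0 -> c < s i) ->
    (forall i, xs 0 i != 0 -> 2 * `|p i 0 - p i (-1)| <= al * `|xs 0 i|) ->
  \forall xy \near (xs, ystar), forall i,
    (xs 0 i = 0 -> c <= (xy : 'rV[R]_n * 'rV[R]_n).2 0 i) /\
    (xs 0 i != 0 -> `|p i 0 - p i (-1)| <= al * `|xy.1 0 i|).
Proof.
move=> al_ge0 c_lt_s L_le; apply: (@filter_forall _ _ _ (nbhs (xs, ystar)) _) => i.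
have [xi0|xi_neq0] := eqVneq (xs 0 i) 0.
  have : \forall y \near ystar, c < (y : 'rV[R]_n) 0 i.
    have y_cvg := @coord_continuous R 1 n 0 i ystar.
    by apply: (cvgr_gt _ y_cvg); rewrite /ystar mxE xi0 eqxx; exact: c_lt_s.
  move=> y_near; have : \forall xy \near (xs, ystar),
      c < (xy : 'rV[R]_n * 'rV[R]_n).2 0 i by exact: cvg_snd y_near.
  apply: filterS => xy c_lt_y.
  by split=> [_|//]; exact: ltW.
have : \forall x \near xs, `|xs 0 i| / 2 < `|(x : 'rV[R]_n) 0 i|.
  by apply: near_norm_coord_gt; have := normr_gt0 (xs 0 i); rewrite xi_neq0; lra.
move=> x_near; have : \forall xy \near (xs, ystar),
    `|xs 0 i| / 2 < `|(xy : 'rV[R]_n * 'rV[R]_n).1 0 i| by exact: cvg_fst x_near.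
apply: filterS => xy half_lt_x.
split=> [/eqP|_]; first by rewrite (negbTE xi_neq0).
have := L_le i xi_neq0; have := ler_wpM2l al_ge0 (ltW half_lt_x); lra.
Qed.

Lemma pen_local_min_of_l1_local_min al c : 0 <= al ->
    (forall i, xs 0 i = 0 -> c < s i) ->
    (forall i, xs 0 i != 0 -> 2 * `|p i 0 - p i (-1)| <= al * `|xs 0 i|) ->
    local_minimizer (l1_obj (al * c)) D xs ->
  local_minimizer (pen_obj al) pen_feasible (xs, ystar).
Proof.
move=> al_ge0 c_lt_s L_le [Dxs l1_min]; split; first by split=> //; exact: ystar_ge0.
have l1_near : \forall xy \near (xs, ystar), D (xy : 'rV[R]_n * 'rV[R]_n).1 ->
    l1_obj (al * c) xs <= l1_obj (al * c) xy.1 by exact: cvg_fst l1_min.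
have bounds_near := near_star_bounds al_ge0 c_lt_s L_le.
apply: filterS2 l1_near bounds_near.
move=> [x y] /= l1_le bounds [/= Dx y_ge0].
have := l1_le Dx; rewrite pen_obj_star l1_obj_star /l1_obj norm1c_Pmat /pen_obj /=.
have : al * c * \sum_(i in I0 xs) `|x 0 i| + \sum_i p i (ystar 0 i) <=
    \sum_i p i (y 0 i) + al * \sum_i `|x 0 i| * y 0 i.
  rewrite mulr_sumr big_mkcond -big_split /= mulr_sumr -big_split /=.
  apply: ler_sum => i _; rewrite inE; have [c_le_y L_le_x] := bounds i.
  exact: pen_term_ge.
lra.
Qed.

Lemma l1_local_min_of_pen_local_min al M : 0 <= al -> (forall i, s i <= M) ->
    local_minimizer (pen_obj al) pen_feasible (xs, ystar) ->
  local_minimizer (l1_obj (al * M)) D xs.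
Proof.
move=> al_ge0 s_le_M /local_minimizer_section [[Dxs _] pen_min]; split=> //.
apply: filterS pen_min => x pen_le Dx.
have := pen_le (conj Dx ystar_ge0).
rewrite pen_obj_star l1_obj_star /pen_obj /l1_obj norm1c_Pmat /=.
have : \sum_i `|x 0 i| * ystar 0 i <= M * \sum_(i in I0 xs) `|x 0 i|.
  rewrite mulr_sumr [X in _ <= X]big_mkcond /=; apply: ler_sum => i _.
  rewrite /ystar mxE inE; case: ifP => _; last by rewrite mulr0.
  by rewrite mulrC ler_wpM2r.
move=> /(ler_wpM2l al_ge0); rewrite mulrA; lra.
Qed.

Lemma exact_pen_of_exact_l1 a0 : 0 < a0 ->
    (forall al, a0 <= al -> local_minimizer (l1_obj al) D xs) ->
  exists2 b0, 0 < b0 & forall al, b0 <= al ->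
    local_minimizer (pen_obj al) pen_feasible (xs, ystar).
Proof.
move=> a0_gt0 l1_min.
have [M M_gt0 sV_lt_M] := exists_ub_gt (fun i => (s i)^-1).
have [K K_gt0 L_lt_K] := exists_ub_gt (fun i => 2 * `|p i 0 - p i (-1)| / `|xs 0 i|).
have a0M_gt0 : 0 < a0 * M by exact: mulr_gt0.
exists (a0 * M + K) => [|al al_ge]; first exact: addr_gt0.
apply: (@pen_local_min_of_l1_local_min _ M^-1); first lra.
- by move=> i _; rewrite -[s i]invrK ltf_pV2 ?posrE ?invr_gt0.
- move=> i xi_neq0; have xi_gt0 : 0 < `|xs 0 i| by rewrite normr_gt0.
  have := L_lt_K i; rewrite ltr_pdivrMr // => /ltW /le_trans; apply.
  by rewrite ler_wpM2r ?ltW //; lra.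
- by apply: l1_min; rewrite ler_pdivlMr //; lra.
Qed.

Lemma exact_l1_of_exact_pen a0 : 0 < a0 ->
    (forall al, a0 <= al -> local_minimizer (pen_obj al) pen_feasible (xs, ystar)) ->
  exists2 b0, 0 < b0 & forall al, b0 <= al -> local_minimizer (l1_obj al) D xs.
Proof.
move=> a0_gt0 pen_min; have [M M_gt0 s_lt_M] := exists_ub_gt s.
exists (a0 * M) => [|al al_ge]; first exact: mulr_gt0.
have -> : al = al / M * M by rewrite divfK // gt_eqF.
apply: l1_local_min_of_pen_local_min => [|i|].
- by rewrite divr_ge0 // ltW // (lt_le_trans _ al_ge) // mulr_gt0.
- exact/ltW/s_lt_M.
- by apply: pen_min; rewrite ler_pdivlMr.
Qed.
End ExactPenalty.

Theorem mainTheorem2 (R : realType) (n m : nat)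
  (f : 'rV[R]_n -> R) (g : 'rV[R]_n -> 'rV[R]_m) (X : set 'rV[R]_m)
  (rho : R) (p : 'I_n -> R -> R) (s : 'I_n -> R) (xs : 'rV[R]_n) :
  C1_scalar f -> C1 g ->
  X !=set0 -> closed X ->
  0 < rho ->
  (forall i, P_conditions rho (p i) (s i)) ->
  local_minimizer (fun x => f x + rho * (norm0 x)%:R) [set x | X (g x)] xs ->
  let ys : 'rV[R]_n := \row_i (if xs 0 i == 0 then s i else 0) in
  (exists2 alpha0 : R, 0 < alpha0 & forall alpha : R, alpha0 <= alpha ->
     local_minimizer (fun x => f x + alpha * norm1c (Pmat xs *m x^T))
       [set x | X (g x)] xs)
  <->
  (exists2 alpha0 : R, 0 < alpha0 & forall alpha : R, alpha0 <= alpha ->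
     local_minimizer
       (fun xy : 'rV[R]_n * 'rV[R]_n =>
          f xy.1 + \sum_(i < n) p i (xy.2 0 i)
          + alpha * \sum_(i < n) `|xy.1 0 i| * xy.2 0 i)
       [set xy : 'rV[R]_n * 'rV[R]_n | X (g xy.1) /\ forall i, 0 <= xy.2 0 i]
       (xs, ys)).
Proof.
move=> _ _ _ _ _ HP _ ys.
have p_convex i : convexR (p i) by case: (HP i).
have s_gt0 i : 0 < s i by case: (HP i).
have p_min i t : p i (s i) <= p i t.
  by case: (HP i) => _ _ s_min _ _; have [->|/s_min/ltW] := eqVneq t (s i).
split=> -[a0 a0_gt0 exact_min].
- exact: (exact_pen_of_exact_l1 p_convex s_gt0 p_min a0_gt0 exact_min).
- exact: (exact_l1_of_exact_pen s_gt0 a0_gt0 exact_min).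
Qed.
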